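(* Let $SG$ be a signed graph and $e,e'$ two distinct parallel edges of $SG$ with the same sign (parallel meaning they join the same pair of vertices, where the two endpoints may coincide, i.e. both may be loops at the same vertex). Then for all $i$, $H^i(SG)\cong H^i(SG-e')$ and $H^i_b(SG)\cong H^i_b(SG-e')$.
   Context: Signed graphs: $SG=(G,\sigma)$, $G$ finite (loops, multiple edges allowed), $\sigma:E(G)\to\{\pm1\}$; $SG-e'$ deletes $e'$. Negative circuit: product of edge signs $-1$ (a loop is a circuit of one edge); balanced = no negative circuit. $[G:s]$, $[SG:s]$: spanning subgraph with edge set $s$. Complexes: Fix a total order on $E(G)$. An enhanced state of $G$ is $S=(s,c)$, $c$ labels each component of $[G:s]$ by $1$ or $x$; $j(S)$ = number of $x$-labels (grading). With $m(1,1)=1$, $m(1,x)=m(x,1)=x$, $m(x,x)=0$: for $a\notin s$, $S_a=(s\cup\{a\},c_a)$ where a component containing both ends of $a$ keeps its label and if $a$ joins components $E_i,E_j$ the merged one gets $m(c(E_i),c(E_j))$ ($S_a=0$ if both are $x$). $d(S)=\sum_{a\notin s}(-1)^{n(a)}S_a$, $n(a)$ = number of edges of $s$ preceding $a$. $H^i(SG)$: cohomology of $C^\bullet(SG)$, free on enhanced states whose $c$ assigns $1$ to every unbalanced component of $[SG:s]$, differential $d_s=f\circ d$ with $f$ projecting onto these states. $H^i_b(SG)$: cohomology of $C^\bullet_b(SG)$, free on enhanced states with $[SG:s]$ balanced, differential $d_b=f_b\circ d$, $f_b$ the analogous projection. *)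

From HB Require Import structures.
From mathcomp Require Import all_boot all_order all_algebra.
Set Implicit Arguments. Unset Strict Implicit. Unset Printing Implicit Defensive.
Import GRing.Theory.

(* A finite signed graph with vertex set V and edge set [edges] inside the
   ambient totally ordered set 'I_m (the total order on E(G) is the order of
   'I_m).  Each edge a has endpoints [src a], [tgt a] (possibly equal: loop);
   multiple edges are allowed.  [neg a] = true iff sigma(a) = -1. *)
Record sgraph (V : finType) (m : nat) := SGraph {
  edges : {set 'I_m};
  src : 'I_m -> V;
  tgt : 'I_m -> V;
  neg : 'I_m -> bool }.

Definition delete_edge V m (G : sgraph V m) (e' : 'I_m) : sgraph V m :=
  SGraph (edges G :\ e') (@src V m G) (@tgt V m G) (@neg V m G).

Definition parallel V m (G : sgraph V m) (e e' : 'I_m) : bool :=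
  ((src G e == src G e') && (tgt G e == tgt G e'))
  || ((src G e == tgt G e') && (tgt G e == src G e')).

Section SignedGraphComplexes.
Variables (V : finType) (m : nat) (G : sgraph V m).

Definition joins (a : 'I_m) (x y : V) : bool :=
  ((src G a == x) && (tgt G a == y)) || ((src G a == y) && (tgt G a == x)).

Definition adj (s : {set 'I_m}) : rel V := fun x y => [exists a in s, joins a x y].
Definition conn (s : {set 'I_m}) : rel V := connect (adj s).
Definition component (s : {set 'I_m}) (w : V) : {set V} := [set y | conn s w y].

(* (es, vs) is a circuit of [G : s]: distinct edges es_0..es_(k-1) and distinct
   vertices vs_0..vs_(k-1), k >= 1, where es_i joins vs_i and vs_(i+1 mod k).
   (k = 1 is a loop.) *)
Definition is_circuit (s : {set 'I_m}) (es : seq 'I_m) (vs : seq V) : bool :=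
  [&& 0 < size es, size vs == size es, uniq es, uniq vs,
      all (fun a => a \in s) es &
      all (fun t => joins t.1 t.2.1 t.2.2) (zip es (zip vs (rot 1 vs)))].

Definition neg_circuit (s : {set 'I_m}) (es : seq 'I_m) (vs : seq V) : Prop :=
  is_circuit s es vs /\ odd (count (neg G) es).

Definition balanced (s : {set 'I_m}) : Prop :=
  forall es vs, ~ neg_circuit s es vs.

Definition unbalanced_comp (s : {set 'I_m}) (w : V) : Prop :=
  exists es vs, neg_circuit s es vs /\ all (conn s w) vs.

(* Enhanced states.  A labelling of the components of [G : s] by 1 / x is
   encoded as a vertex function c : V -> bool (true = x) constant on the
   components of [G : s]. *)
Definition state := ({set 'I_m} * {ffun V -> bool})%type.

Definition is_enhanced (S : state) : Prop :=
  S.1 \subset edges G /\ forall u v, conn S.1 u v -> S.2 u = S.2 v.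

(* i-grading |s| and j-grading: number of x-labelled components *)
Definition jdeg (S : state) : nat := #|(component S.1) @: [set w | S.2 w]|.
Definition in_degree (i j : nat) (S : state) : Prop := #|S.1| = i /\ jdeg S = j.

(* S_a (None stands for S_a = 0) *)
Definition step (S : state) (a : 'I_m) : option state :=
  let s := S.1 in let c := S.2 in
  let u := src G a in let v := tgt G a in
  if conn s u v then Some (a |: s, c)
  else if c u && c v then None
  else Some (a |: s, [ffun w => if conn s u w || conn s v w then c u || c v else c w]).

Definition npre (s : {set 'I_m}) (a : 'I_m) : nat := #|[set b in s | (b < a)%N]|.

Definition dcoef (S T : state) : int :=
  (\sum_(a in edges G :\: S.1)
     (if step S a == Some T then (-1) ^+ npre S.1 a else 0))%R.

(* the unprojected differential d, on integer chains over all states *)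
Definition dfull (x : {ffun state -> int}) (T : state) : int :=
  (\sum_(S : state) x S * dcoef S T)%R.

Definition supported (P : state -> Prop) (x : {ffun state -> int}) : Prop :=
  forall S, ~ P S -> x S = 0%R.

(* Given the predicate W selecting the basis states of the complex
   (the differential being f o d with f the projection onto W-states):
   cocycles and coboundaries in bidegree (i, j). *)
Definition cocycle (W : state -> Prop) (i j : nat) (x : {ffun state -> int}) : Prop :=
  supported (fun S => W S /\ in_degree i j S) x /\
  forall T, W T -> dfull x T = 0%R.

Definition coboundary (W : state -> Prop) (i j : nat) (x : {ffun state -> int}) : Prop :=
  supported (fun S => W S /\ in_degree i j S) x /\
  match i with
  | 0 => x = 0%R
  | i'.+1 => exists y, supported (fun S => W S /\ in_degree i' j S) y /\
                       forall T, W T -> x T = dfull y T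
  end.

(* basis states of C(SG): c assigns 1 to every unbalanced component *)
Definition W_SG (S : state) : Prop :=
  is_enhanced S /\ forall w, unbalanced_comp S.1 w -> S.2 w = false.

Definition W_b (S : state) : Prop := is_enhanced S /\ balanced S.1.

End SignedGraphComplexes.

(* Z1/B1 is isomorphic (as an abelian group) to Z2/B2: there are additive maps
   between the cocycle groups preserving coboundaries whose induced maps on the
   quotients are mutually inverse. *)
Definition quot_iso (K1 K2 : finType)
  (Z1 B1 : {ffun K1 -> int} -> Prop) (Z2 B2 : {ffun K2 -> int} -> Prop) : Prop :=
  exists (f : {ffun K1 -> int} -> {ffun K2 -> int})
         (g : {ffun K2 -> int} -> {ffun K1 -> int}),
  [/\ (forall x, Z1 x -> Z2 (f x)),
      (forall x y, Z1 x -> Z1 y -> f (x + y)%R = (f x + f y)%R) &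
      (forall x, B1 x -> B2 (f x))] /\
  [/\ (forall y, Z2 y -> Z1 (g y)),
      (forall x y, Z2 x -> Z2 y -> g (x + y)%R = (g x + g y)%R) &
      (forall y, B2 y -> B1 (g y))] /\
  (forall x, Z1 x -> B1 (g (f x) - x)%R) /\
  (forall y, Z2 y -> B2 (f (g y) - y)%R).

Definition H_iso V m (G1 G2 : sgraph V m) (i j : nat) : Prop :=
  quot_iso (cocycle G1 (W_SG G1) i j) (coboundary G1 (W_SG G1) i j)
           (cocycle G2 (W_SG G2) i j) (coboundary G2 (W_SG G2) i j).

Definition Hb_iso V m (G1 G2 : sgraph V m) (i j : nat) : Prop :=
  quot_iso (cocycle G1 (W_b G1) i j) (coboundary G1 (W_b G1) i j)
           (cocycle G2 (W_b G2) i j) (coboundary G2 (W_b G2) i j).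

From mathcomp Require Import all_boot all_order all_algebra zify ring.
Set Implicit Arguments. Unset Strict Implicit. Unset Printing Implicit Defensive.
Import GRing.Theory Num.Theory.
Local Open Scope ring_scope.

(* Let e, e' be distinct parallel edges of SG with the same sign and let D be
   SG - e'.  Basis states of C(D) (resp. C_b(D)) are exactly the basis states
   of C(SG) (resp. C_b(SG)) not containing e'.  The proof builds chain maps

     restrict : C(SG) -> C(D)   (forget the states containing e'),
     lift     : C(D) -> C(SG)   (keep states without e'; a state with e' but
                                 without e receives, up to sign, the value of
                                 its image under the transposition e <-> e'),

   with restrict o lift = id and lift o restrict homotopic to the identity;
   the homotopy pairs a state s containing e' but not e with e |: s, which has
   the same components since e' already joins the ends of e.

   Since no negative circuit passes through both e and
   e', the bases of C and C_b are such families, which gives the theorem. *)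

Section Differential.
Variables (V : finType) (m : nat) (H : sgraph V m).
Local Notation state := (state V m).
Implicit Types (S T : state).

Lemma step_edges S a T : step H S a = Some T -> T.1 = a |: S.1.
Proof. by rewrite /step; case: ifP => [_ [<-] //|_]; case: ifP => // _ [<-]. Qed.

Lemma dcoefE S T a : a \in edges H -> a \notin S.1 -> T.1 = a |: S.1 ->
  dcoef H S T = if step H S a == Some T then (-1) ^+ npre S.1 a else 0.
Proof.
move=> aE aS TE; rewrite /dcoef (bigD1 a) ?inE ?aE ?aS //= big1 ?addr0 //.
move=> b /andP[bS ba]; case: eqP => // /step_edges; rewrite TE => E.
have: b \in b |: S.1 by rewrite setU11.
by rewrite -E !inE (negbTE ba); move: bS; rewrite !inE => /andP[/negbTE ->].
Qed.

Lemma dcoef_eq0 S T :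
  (forall a, a \in edges H -> a \notin S.1 -> T.1 != a |: S.1) -> dcoef H S T = 0.
Proof.
move=> noedge; rewrite /dcoef big1 // => a; rewrite !inE => /andP[aS aE].
by case: eqP => // /step_edges TE; move: (noedge a aE aS); rewrite TE eqxx.
Qed.

Lemma dcoef_lost S T a : a \in S.1 -> a \notin T.1 -> dcoef H S T = 0.
Proof.
move=> aS aT; apply: dcoef_eq0 => b _ _; apply/eqP => TE.
by move: aT; rewrite TE !inE aS orbT.
Qed.

Lemma dfullB (x y : {ffun state -> int}) T :
  dfull H (x - y) T = dfull H x T - dfull H y T.
Proof. by rewrite /dfull -sumrB; apply: eq_bigr => S _; rewrite !ffunE mulrBl. Qed.

Lemma dfull0 T : dfull H 0 T = 0.
Proof. by rewrite /dfull big1 // => S _; rewrite ffunE mul0r. Qed.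

End Differential.

Lemma added_edge m (a x : 'I_m) (s T : {set 'I_m}) : T = a |: s -> x \in T -> x \notin s -> x = a.
Proof. by move=> -> /setU1P[//|xs]; rewrite xs. Qed.

Lemma npreU1 m (a b : 'I_m) (s : {set 'I_m}) : a \notin s -> npre (a |: s) b = (npre s b + (a < b))%N.
Proof.
move=> aNs; rewrite /npre.
have -> : [set x in a |: s | (x < b)%N] =
   if (a < b)%N then a |: [set x in s | (x < b)%N] else [set x in s | (x < b)%N].
  apply/setP=> x; rewrite !inE; case: (eqVneq x a) => [->|xa] /=.
    by case: ifP => ab; rewrite !inE ?eqxx ?(negbTE aNs) ?ab.
  by case: ifP => _; rewrite !inE ?(negbTE xa).
case: ifP => ab; last by rewrite addn0.
by rewrite cardsU1 !inE (negbTE aNs) addnC.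
Qed.

Lemma ltn_ordC m (a b : 'I_m) : a != b -> (a < b)%N = ~~ (b < a)%N.
Proof. by move=> ab; rewrite ltnNge leq_eqVlt negb_or eq_sym ab. Qed.

Lemma sign_odd (a b : nat) : odd a = odd b -> (-1) ^+ a = (-1) ^+ b :> int.
Proof. by move=> h; rewrite -signr_odd h signr_odd. Qed.

Lemma sign_oppS (a : nat) : - ((-1) ^+ a) = (-1) ^+ a.+1 :> int.
Proof. by rewrite exprS mulN1r. Qed.

Section Circuits.
Variables (V : finType) (m : nat) (H : sgraph V m).
Implicit Types (s : {set 'I_m}) (es : seq 'I_m) (vs : seq V).

Lemma joins_ends a x y x' y' : joins H a x y -> joins H a x' y' ->
  (x = x' /\ y = y') \/ (x = y' /\ y = x').
Proof.
by rewrite /joins; case/orP=> /andP[/eqP <- /eqP <-]; case/orP=> /andP[/eqP <- /eqP <-]; auto.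
Qed.

Lemma neg_circuit_edges s es vs a : neg_circuit H s es vs -> a \in es -> a \in s.
Proof. by move=> [/and5P[_ _ _ _ /andP[/allP sub _]] _] /sub. Qed.

Lemma neg_circuit_sub s1 s2 es vs :
  s1 \subset s2 -> neg_circuit H s1 es vs -> neg_circuit H s2 es vs.
Proof.
move=> /subsetP sub [/and5P[k0 svs ues uvs /andP[aes ajs]] ng]; split=> //.
apply/and5P; split=> //; apply/andP; split=> //.
by apply/allP => a /(allP aes) /sub.
Qed.

Lemma neg_circuit_map (f : 'I_m -> 'I_m) s1 s2 es vs :
  (forall a x y, joins H (f a) x y = joins H a x y) -> (forall a, neg H (f a) = neg H a) ->
  {in es &, injective f} -> (forall a, a \in es -> f a \in s2) ->
  neg_circuit H s1 es vs -> neg_circuit H s2 (map f es) vs.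
Proof.
move=> fj fn finj fs [/and5P[k0 /eqP svs ues uvs /andP[_ ajs]] ng].
split; last by rewrite count_map (eq_count (a2 := neg H)) // => a /=; rewrite fn.
apply/and5P; split; rewrite ?size_map ?svs ?map_inj_in_uniq //.
apply/andP; split; first by apply/allP => b /mapP [a aes ->]; apply: fs.
elim: es (zip vs (rot 1 vs)) ajs {k0 svs ues finj fs ng} => [|a es IH] [|p l] //=.
by rewrite fj => /andP[-> /IH].
Qed.

Definition cyc_succ (k n : nat) : nat := if (n.+1 < k)%N then n.+1 else 0%N.

Lemma cyc_succ_lt k n : (n < k)%N -> (cyc_succ k n < k)%N.
Proof. by rewrite /cyc_succ; case: ifP => // _; case: k. Qed.

Lemma cyc_succ_swap k a b : (a < k)%N -> (b < k)%N -> a != b ->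
  a = cyc_succ k b -> b = cyc_succ k a -> k = 2%N.
Proof. by rewrite /cyc_succ => ak bk ab; case: ifP => ?; case: ifP => ? h1 h2; move/eqP: ab; lia. Qed.

Lemma circuit_joins s es v0 vs a0 n : is_circuit H s es (v0 :: vs) -> (n < size es)%N ->
  joins H (nth a0 es n) (nth v0 (v0 :: vs) n) (nth v0 (v0 :: vs) (cyc_succ (size es) n)).
Proof.
case/and5P=> _ /eqP svs _ _ /andP[_ ajs] nk.
have szip : size (zip es (zip (v0 :: vs) (rot 1 (v0 :: vs)))) = size es.
  by rewrite !size_zip size_rot svs !minnn.
move/(all_nthP (a0, (v0, v0))): ajs; rewrite szip => /(_ n nk).
rewrite nth_zip ?size_zip ?size_rot ?svs ?minnn //= nth_zip ?size_rot //=.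
rewrite rot1_cons nth_rcons /cyc_succ.
have -> : size vs = (size es).-1 by rewrite -svs.
case: ifP => nk1; first by rewrite ifT // -ltn_predRL.
by rewrite -ltn_predRL nk1; case: ifP.
Qed.

Lemma circuit_parallel_size s es vs a b : is_circuit H s es vs ->
  a \in es -> b \in es -> a != b -> (forall x y, joins H a x y = joins H b x y) ->
  size es = 2%N.
Proof.
case: vs => [|v0 vs] C aes bes ab jab.
  by case/and5P: C => k0 /eqP svs; move: k0; rewrite -svs.
have [_ /eqP svs _ uvs _] := and5P C.
set i := index a es; set i' := index b es.
have ik : (i < size es)%N by rewrite index_mem.
have i'k : (i' < size es)%N by rewrite index_mem.
have ni : nth a es i = a by rewrite nth_index.
have ni' : nth a es i' = b by rewrite nth_index.
have ii' : i != i' by apply: contraNneq ab => E; rewrite -ni E ni'.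
have j1 := circuit_joins a C ik; have j2 := circuit_joins a C i'k.
rewrite ni in j1; rewrite ni' -jab in j2.
have nv c d : (c < size es)%N -> (d < size es)%N ->
    nth v0 (v0 :: vs) c = nth v0 (v0 :: vs) d -> c = d.
  by move=> ck dk /eqP; rewrite nth_uniq ?svs // => /eqP.
case: (joins_ends j1 j2) => [[E1 _]|[E1 E2]].
  by move: ii'; rewrite (nv _ _ ik i'k E1) eqxx.
apply: (cyc_succ_swap ik i'k ii').
  exact: nv _ _ ik (cyc_succ_lt i'k) E1.
exact: esym (nv _ _ (cyc_succ_lt ik) i'k E2).
Qed.

End Circuits.

Section ParallelEdges.
Variables (V : finType) (m : nat) (G : sgraph V m) (e e' : 'I_m).
Hypotheses (eE : e \in edges G) (e'E : e' \in edges G) (ee' : e != e')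
  (par : parallel G e e') (sgn : neg G e = neg G e').

Local Notation state := (state V m).
Implicit Types (s : {set 'I_m}) (S T : state).

Lemma joinsC a x y : joins G a x y = joins G a y x.
Proof. by rewrite /joins orbC. Qed.

Lemma joins_parallel x y : joins G e x y = joins G e' x y.
Proof.
move: par; rewrite /parallel /joins; case/orP=> /andP[/eqP -> /eqP ->] //.
by rewrite orbC; congr (_ || _); apply: andbC.
Qed.

Definition swap_edge (a : 'I_m) := if a == e then e' else if a == e' then e else a.

Lemma swap_e : swap_edge e = e'. Proof. by rewrite /swap_edge eqxx. Qed.
Lemma swap_e' : swap_edge e' = e.
Proof. by rewrite /swap_edge eq_sym (negbTE ee') eqxx. Qed.
Lemma swap_other a : a != e -> a != e' -> swap_edge a = a.
Proof. by rewrite /swap_edge => /negbTE -> /negbTE ->. Qed.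

Lemma swap_edgeK : involutive swap_edge.
Proof.
move=> a; case: (eqVneq a e) => [->|ae]; first by rewrite swap_e swap_e'.
case: (eqVneq a e') => [->|ae']; first by rewrite swap_e' swap_e.
by rewrite !swap_other.
Qed.

Lemma swap_edge_inj : injective swap_edge. Proof. exact: can_inj swap_edgeK. Qed.

Lemma joins_swap a x y : joins G (swap_edge a) x y = joins G a x y.
Proof.
rewrite /swap_edge; case: (eqVneq a e) => [->|ae]; first by rewrite joins_parallel.
by case: (eqVneq a e') => [->|//]; rewrite joins_parallel.
Qed.

Lemma neg_swap a : neg G (swap_edge a) = neg G a.
Proof. by rewrite /swap_edge; case: (eqVneq a e) => [->//|_]; case: eqP => [->|]. Qed.

Lemma edges_swap a : (swap_edge a \in edges G) = (a \in edges G).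
Proof.
rewrite /swap_edge; case: (eqVneq a e) => [->|ae]; first by rewrite eE e'E.
by case: (eqVneq a e') => [->|//]; rewrite eE e'E.
Qed.

Definition swap_set s : {set 'I_m} := swap_edge @^-1: s.

Lemma in_swap_set s a : (a \in swap_set s) = (swap_edge a \in s).
Proof. by rewrite inE. Qed.

Lemma swap_setK : involutive swap_set.
Proof. by move=> s; apply/setP=> a; rewrite !in_swap_set swap_edgeK. Qed.

Lemma card_swap_set s : #|swap_set s| = #|s|.
Proof. exact: card_preimset swap_edge_inj. Qed.

Lemma swap_set_sub s : s \subset edges G -> swap_set s \subset edges G.
Proof.
by move=> /subsetP sE; apply/subsetP => a; rewrite in_swap_set -edges_swap => /sE.
Qed.

Lemma swap_setU1 a s : swap_set (a |: s) = swap_edge a |: swap_set s.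
Proof.
apply/setP=> b; rewrite !inE; congr (_ || _).
by apply/eqP/eqP => [<-|->]; rewrite swap_edgeK.
Qed.

Lemma swap_set_id s : (e \in s) = (e' \in s) -> swap_set s = s.
Proof.
move=> E; apply/setP=> a; rewrite in_swap_set /swap_edge.
case: (eqVneq a e) => [->|ae]; first by rewrite E.
by case: (eqVneq a e') => [->|//]; rewrite E.
Qed.

Lemma swap_set_e'U s : e \notin s -> e' \notin s -> swap_set (e' |: s) = e |: s.
Proof.
by move=> es e's; rewrite swap_setU1 swap_e' swap_set_id // (negbTE es) (negbTE e's).
Qed.

Lemma adj_swap s x y : adj G (swap_set s) x y = adj G s x y.
Proof.
apply/existsP/existsP => -[a /andP[aS j]].
  by exists (swap_edge a); rewrite -in_swap_set joins_swap aS.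
by exists (swap_edge a); rewrite in_swap_set swap_edgeK aS joins_swap.
Qed.

Lemma conn_swap s : conn G (swap_set s) =2 conn G s.
Proof. exact: eq_connect (adj_swap s). Qed.

Lemma adj_add_e s x y : e' \in s -> adj G (e |: s) x y = adj G s x y.
Proof.
move=> e's; apply/existsP/existsP => -[a /andP[aS j]]; last first.
  by exists a; rewrite !inE aS orbT.
move: aS; rewrite !inE => /orP[/eqP ae|aS]; last by exists a; rewrite aS.
by exists e'; rewrite e's -joins_parallel -ae.
Qed.

Lemma conn_add_e s : e' \in s -> conn G (e |: s) =2 conn G s.
Proof. by move=> e's; apply: eq_connect => x y; apply: adj_add_e. Qed.

Lemma conn_sym s x y : conn G s x y = conn G s y x.
Proof.
apply: sym_connect_sym => u v.
by apply/existsP/existsP => -[a /andP[aS j]]; exists a; rewrite aS joinsC.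
Qed.

Definition swap_state S : state := (swap_set S.1, S.2).
Definition add_e S : state := (e |: S.1, S.2).

Lemma swap_stateK : involutive swap_state.
Proof. by case=> s c; rewrite /swap_state /= swap_setK. Qed.

Lemma swap_state_inj : injective swap_state. Proof. exact: can_inj swap_stateK. Qed.

Lemma swap_state_id S : (e \in S.1) = (e' \in S.1) -> swap_state S = S.
Proof. by case: S => s c /= E; rewrite /swap_state swap_set_id. Qed.

Lemma omap_swap_state (o : option state) T :
  (omap swap_state o == Some (swap_state T)) = (o == Some T).
Proof.
case: o => [T'|] //=; apply/eqP/eqP => [E|[->]] //.
by move: E => /(congr1 (omap swap_state)) /=; rewrite !swap_stateK.
Qed.

Lemma add_e_eq S1 S2 : e \notin S1.1 -> e \notin S2.1 ->
  (add_e S1 == add_e S2) = (S1 == S2).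
Proof.
case: S1 S2 => [s1 c1] [s2 c2] /= h1 h2; apply/eqP/eqP => [[E1 ->]|->//].
by rewrite -(setU1K h1) E1 setU1K.
Qed.

Lemma step_swap S a : swap_edge a = a ->
  step G (swap_state S) a = omap swap_state (step G S a).
Proof.
case: S => s c fa; rewrite /step /= !conn_swap.
case: ifP => _; first by rewrite /swap_state /= swap_setU1 fa.
case: ifP => _ //=; rewrite /swap_state /= swap_setU1 fa; congr (Some (_, _)).
by apply/ffunP=> w; rewrite !ffunE !conn_swap.
Qed.

Lemma step_e_e' S : e \notin S.1 -> e' \notin S.1 ->
  step G S e = omap swap_state (step G S e').
Proof.
case: S => s c /= es e's; have Es := swap_set_e'U es e's.
move: par; rewrite /parallel /step; case/orP=> /andP[/eqP -> /eqP ->].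
  case: ifP => _; first by rewrite /swap_state /= Es.
  by case: ifP => _ //=; rewrite /swap_state /= Es.
rewrite conn_sym; case: ifP => _; first by rewrite /swap_state /= Es.
rewrite andbC; case: ifP => _ //=; rewrite /swap_state /= Es; congr (Some (_, _)).
by apply/ffunP=> w; rewrite !ffunE orbC [c (src G e') || _]orbC.
Qed.

(* Adding e next to e' (or e' next to e) joins two vertices already connected. *)
Lemma step_e S : e' \in S.1 -> step G S e = Some (add_e S).
Proof.
case: S => s c /= e's; rewrite /step /=.
suff -> : conn G s (src G e) (tgt G e) by [].
by apply: connect1; apply/existsP; exists e'; rewrite e's -joins_parallel /joins !eqxx.
Qed.

Lemma step_e' S : e \in S.1 -> step G S e' = Some (e' |: S.1, S.2).
Proof.
case: S => s c /= es; rewrite /step /=.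
suff -> : conn G s (src G e') (tgt G e') by [].
by apply: connect1; apply/existsP; exists e; rewrite es joins_parallel /joins !eqxx.
Qed.

Lemma step_add_e S a : e' \in S.1 -> step G (add_e S) a = omap add_e (step G S a).
Proof.
case: S => s c /= e's; rewrite /step /= !conn_add_e //.
case: ifP => _; first by rewrite /add_e /= setUCA.
case: ifP => _ //=; rewrite /add_e /= setUCA; congr (Some (_, _)).
by apply/ffunP=> w; rewrite !ffunE !conn_add_e.
Qed.

Local Notation D := (delete_edge G e').
Implicit Types (x y z u : {ffun state -> int}).

Lemma edges_delete a : (a \in edges D) = (a != e') && (a \in edges G).
Proof. by rewrite /= !inE. Qed.

Lemma dcoef_delete S T : e' \notin T.1 -> dcoef D S T = dcoef G S T.
Proof.
move=> e'T.
case: (pickP (fun a => [&& a \in edges G, a \notin S.1 & T.1 == a |: S.1])).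
  move=> a /and3P[aE aS /eqP TE].
  have ae' : a != e' by apply: contraNneq e'T => <-; rewrite TE setU11.
  by rewrite (dcoefE aE aS TE) (@dcoefE _ _ D _ _ a) // edges_delete ae' aE.
move=> none; rewrite !dcoef_eq0 // => a aE aS; apply/negP => /eqP TE.
  by move: (none a); rewrite aE aS TE eqxx.
by move: (none a); move: aE; rewrite edges_delete => /andP[_ ->]; rewrite aS TE eqxx.
Qed.

(* Parity goals only involve counts n(.) and edge comparisons; the context is
   irrelevant and is discarded before calling lia. *)
Ltac parity := repeat match goal with H : _ |- _ => clear H end; lia.

Definition swap_sign (t : {set 'I_m}) : int := (-1) ^+ (npre t e + npre t e').
Definition add_e_sign S : int := (-1) ^+ npre S.1 e.

Lemma add_e_sign2 S : add_e_sign S * add_e_sign S = 1.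
Proof. by rewrite /add_e_sign -exprD -signr_odd oddD addbb. Qed.

Definition restrict (x : {ffun state -> int}) : {ffun state -> int} :=
  [ffun S : state => if e' \in S.1 then 0 else x S].

Definition lift (y : {ffun state -> int}) : {ffun state -> int} :=
  [ffun S : state => if e' \in S.1 then
                       (if e \in S.1 then 0 else swap_sign (S.1 :\ e') * y (swap_state S))
                     else y S].

Definition homotopy (u : {ffun state -> int}) : {ffun state -> int} :=
  [ffun S : state => if (e' \in S.1) && (e \notin S.1) then add_e_sign S * u (add_e S) else 0].

Lemma dfull_restrict x T : e' \notin T.1 -> dfull D (restrict x) T = dfull G x T.
Proof.
move=> e'T; apply: eq_bigr => S _; rewrite ffunE.
case: ifP => e'S; first by rewrite mul0r (dcoef_lost G e'S e'T) mulr0.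
by rewrite dcoef_delete.
Qed.

Lemma dfull_lift_out z T : (forall S, e' \in S.1 -> z S = 0) -> e' \notin T.1 ->
  dfull G (lift z) T = dfull D z T.
Proof.
move=> zD e'T; apply: eq_bigr => S _; rewrite ffunE.
case: ifP => e'S; first by rewrite (dcoef_lost G e'S e'T) (dcoef_lost D e'S e'T) !mulr0.
by rewrite dcoef_delete.
Qed.

Lemma dcoef_lift_swapped S T : e' \in S.1 -> e \notin S.1 -> e' \in T.1 -> e \notin T.1 ->
  swap_sign (S.1 :\ e') * dcoef G S T =
  swap_sign (T.1 :\ e') * dcoef D (swap_state S) (swap_state T).
Proof.
move=> e'S eS e'T eT.
case: (pickP (fun a => [&& a \in edges G, a \notin S.1 & T.1 == a |: S.1])); last first.
  move=> none; rewrite !dcoef_eq0 ?mulr0 // => a aE aS; apply/negP => /eqP TE.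
    have TE' : T.1 = swap_edge a |: S.1.
      by rewrite -(swap_setK T.1) -[in RHS](swap_setK S.1) -swap_setU1 -TE.
    have aS' : swap_edge a \notin S.1 by rewrite -in_swap_set.
    move: (none (swap_edge a)); rewrite TE' eqxx andbT aS' andbT.
    by move: aE; rewrite edges_delete edges_swap => /andP[_ ->].
  by move: (none a); rewrite aE aS TE eqxx.
move=> a /and3P[aE aS /eqP TE].
have ae : a != e by apply: contraNneq eT => <-; rewrite TE setU11.
have ae' : a != e' by apply: contraNneq aS => ->.
have fa := swap_other ae ae'.
rewrite (dcoefE aE aS TE) (@dcoefE _ _ D _ _ a); first last.
- by rewrite /swap_state /= TE swap_setU1 fa.
- by rewrite in_swap_set fa.
- by rewrite edges_delete ae' aE.
rewrite [step D _ _](step_swap _ fa) omap_swap_state.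
case: eqP => _; last by rewrite !mulr0.
set t := S.1 :\ e'.
have tS : S.1 = e' |: t by rewrite /t setD1K.
have e't : e' \notin t by rewrite /t !inE eqxx.
have et : e \notin t by rewrite /t !inE negb_and eS orbT.
have at' : a \notin t by rewrite /t !inE negb_and aS orbT.
have -> : T.1 :\ e' = a |: t.
  apply/setP=> x; rewrite TE tS !inE; case: (eqVneq x e') => [->|] //=.
  by rewrite eq_sym (negbTE ae').
have -> : (swap_state S).1 = e |: t by rewrite /= tS swap_set_e'U.
rewrite tS /swap_sign -!exprD; apply: sign_odd.
rewrite !npreU1 // (ltn_ordC ae) (ltn_ordC ae'); parity.
Qed.

(* Matching of coefficients between sources without e, e' and targets
   containing e' only: the step along e' corresponds to the step along e. *)
Lemma dcoef_lift_new S T : e' \notin S.1 -> e \notin S.1 -> e' \in T.1 -> e \notin T.1 ->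
  dcoef G S T = swap_sign (T.1 :\ e') * dcoef D S (swap_state T).
Proof.
move=> e'S eS e'T eT.
have eD : e \in edges D by rewrite edges_delete ee' eE.
case: (eqVneq S.1 (T.1 :\ e')) => [SE|SE]; last first.
  rewrite !dcoef_eq0 ?mulr0 // => a aE aS; apply/negP => /eqP TE.
    have ae : e = a by apply: (added_edge TE); rewrite // /= in_swap_set swap_e.
    move: TE; rewrite -ae => /(congr1 swap_set).
    rewrite swap_setK swap_setU1 swap_e swap_set_id ?(negbTE eS) ?(negbTE e'S) // => TE.
    by move: SE; rewrite TE setU1K ?eqxx.
  have ae : e' = a by apply: (added_edge TE).
  by move: SE; rewrite TE -ae setU1K ?eqxx.
have TE : T.1 = e' |: S.1 by rewrite SE setD1K.
rewrite (dcoefE e'E e'S TE) (@dcoefE _ _ D _ _ e) //; last first.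
  by rewrite /swap_state /= TE swap_set_e'U.
rewrite [step D _ _](step_e_e' eS e'S) omap_swap_state.
case: eqP => _; last by rewrite !mulr0.
by rewrite -SE /swap_sign -!exprD; apply: sign_odd; parity.
Qed.

Lemma dfull_lift_swapped z T : (forall S, e' \in S.1 -> z S = 0) ->
  e' \in T.1 -> e \notin T.1 ->
  dfull G (lift z) T = swap_sign (T.1 :\ e') * dfull D z (swap_state T).
Proof.
move=> zD e'T eT; rewrite /dfull [in RHS](reindex_inj swap_state_inj) mulr_sumr.
apply: eq_bigr => S _; rewrite ffunE.
case: (boolP (e \in S.1)) => eS.
  by rewrite (dcoef_lost _ eS eT) mulr0 zD ?mul0r ?mulr0 // in_swap_set swap_e'.
case: ifP => e'S.
  have E := dcoef_lift_swapped e'S eS e'T eT.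
  transitivity (z (swap_state S) * (swap_sign (S.1 :\ e') * dcoef G S T)); first by ring.
  by rewrite E; ring.
have sS : swap_state S = S by rewrite swap_state_id // (negbTE eS) e'S.
by rewrite sS (dcoef_lift_new (negbT e'S) eS e'T eT) -sS; ring.
Qed.

(* Third kind of targets: those containing both e and e'.  The summands of
   (d lift z)(T) cancel in pairs under the transposition. *)
Section LiftBoth.
Variables (z : {ffun state -> int}) (T : state).
Hypotheses (eT : e \in T.1) (e'T : e' \in T.1).

Let term S := lift z S * dcoef G S T.

Lemma term_swap_e' S : e' \in S.1 -> e \notin S.1 -> term (swap_state S) = - term S.
Proof.
move=> e'S eS; rewrite /term !ffunE.
have e'sw : (e' \in (swap_state S).1) = false by rewrite /= in_swap_set swap_e' (negbTE eS).
rewrite e'sw e'S (negbTE eS).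
set t := S.1 :\ e'.
have tS : S.1 = e' |: t by rewrite /t setD1K.
have e't : e' \notin t by rewrite /t !inE eqxx.
have et : e \notin t by rewrite /t !inE negb_and eS orbT.
have swS : (swap_state S).1 = e |: t by rewrite /= tS swap_set_e'U.
have e'swS : e' \notin (swap_state S).1 by rewrite swS in_setU1 negb_or eq_sym ee' e't.
suff -> : dcoef G (swap_state S) T = - (swap_sign t * dcoef G S T) by ring.
case: (eqVneq T.1 (e |: S.1)) => [TE|TE]; last first.
  rewrite !dcoef_eq0 ?mulr0 ?oppr0 // => a aE aS; apply/negP => /eqP TE'.
    have ae : e = a by apply: (added_edge TE').
    by move: TE; rewrite TE' -ae eqxx.
  have ae : e' = a by apply: (added_edge TE').
  by move: TE; rewrite TE' -ae swS tS setUCA eqxx.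
have TE' : T.1 = e' |: (swap_state S).1 by rewrite swS TE tS setUCA.
rewrite (dcoefE eE eS TE) (dcoefE e'E e'swS TE') step_e // step_e'; last by rewrite swS setU11.
have -> : ((e' |: (swap_state S).1, (swap_state S).2) : state) = add_e S.
  by rewrite /add_e -TE' -TE.
case: eqP => _; last by rewrite mulr0 oppr0.
rewrite /swap_sign tS -!exprD sign_oppS swS; apply: sign_odd.
rewrite !npreU1 // (ltn_ordC ee'); parity.
Qed.

Lemma term_swap S : term (swap_state S) = - term S.
Proof.
case: (boolP (e \in S.1)) => eS; case: (boolP (e' \in S.1)) => e'S.
- by rewrite swap_state_id ?eS ?e'S // /term ffunE e'S eS mul0r oppr0.
- have e'sw : e' \in (swap_state S).1 by rewrite /= in_swap_set swap_e'.
  have esw : e \notin (swap_state S).1 by rewrite /= in_swap_set swap_e.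
  by rewrite -[in RHS](swap_stateK S) (term_swap_e' e'sw esw) opprK.
- exact: term_swap_e'.
rewrite swap_state_id ?(negbTE eS) ?(negbTE e'S) // /term dcoef_eq0 ?mulr0 ?oppr0 //.
move=> a aE aS; apply/negP => /eqP TE.
have ae : e = a by apply: (added_edge TE).
have ae' : e' = a by apply: (added_edge TE).
by move: ee'; rewrite ae ae' eqxx.
Qed.

Lemma dfull_lift_both : dfull G (lift z) T = 0.
Proof.
apply/eqP; rewrite -eqNr; apply/eqP.
rewrite /dfull [RHS](reindex_inj swap_state_inj) -sumrN.
by apply: eq_bigr => S _; exact: (esym (term_swap S)).
Qed.

End LiftBoth.

Lemma homotopy_out u T : e' \notin T.1 -> (forall S, e' \notin S.1 -> u S = 0) ->
  u T = dfull G (homotopy u) T.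
Proof.
move=> e'T uD; rewrite uD // /dfull big1 // => S _; rewrite ffunE.
case: ifP => [/andP[e'S _]|_]; last by rewrite mul0r.
by rewrite (dcoef_lost G e'S e'T) mulr0.
Qed.

(* On states with both e and e', only T :\ e contributes. *)
Lemma homotopy_both u T : e \in T.1 -> e' \in T.1 -> u T = dfull G (homotopy u) T.
Proof.
move=> eT e'T; set S0 : state := (T.1 :\ e, T.2).
have eS0 : e \notin S0.1 by rewrite /S0 /= !inE eqxx.
have e'S0 : e' \in S0.1 by rewrite /S0 /= !inE eq_sym ee'.
have TE : T.1 = e |: S0.1 by rewrite /S0 /= setD1K.
have addS0 : add_e S0 = T by rewrite /add_e /S0 /= setD1K //; case: (T).
rewrite /dfull (bigD1 S0) //= big1 ?addr0.
  rewrite ffunE e'S0 eS0 /= (dcoefE eE eS0 TE) step_e // addS0 eqxx.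
  by rewrite mulrAC add_e_sign2 mul1r.
move=> S SS0; rewrite ffunE; case: ifP => [/andP[e'S eS]|_]; last by rewrite mul0r.
suff -> : dcoef G S T = 0 by rewrite mulr0.
case: (eqVneq T.1 (e |: S.1)) => [TE'|TE'].
  rewrite (dcoefE eE eS TE') step_e //; case: eqP => // [[addS]].
  move: SS0; rewrite /S0 -addS /add_e /= setU1K //.
  by case: S {addS TE' e'S eS} => s c; rewrite eqxx.
apply: dcoef_eq0 => a aE aS; apply/negP => /eqP TE2.
have ae : e = a by apply: (added_edge TE2).
by move: TE'; rewrite TE2 -ae eqxx.
Qed.

Lemma dcoef_add_e S T : e' \in S.1 -> e \notin S.1 -> e \notin T.1 ->
  add_e_sign T * add_e_sign S * dcoef G S T = - dcoef G (add_e S) (add_e T).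
Proof.
move=> e'S eS eT.
case: (pickP (fun a => [&& a \in edges G, a \notin S.1 & T.1 == a |: S.1])); last first.
  move=> none.
  have dST : dcoef G S T = 0.
    apply: dcoef_eq0 => a aE aS; apply/negP => /eqP TE.
    by move: (none a); rewrite aE aS TE eqxx.
  rewrite dST !mulr0 dcoef_eq0 ?oppr0 // => a aE aS; apply/negP => /eqP TE.
  have ae : a != e by apply: contraNneq aS => ->; rewrite /add_e /= setU11.
  have aS' : a \notin S.1 by move: aS; rewrite /add_e /= in_setU1 negb_or => /andP[].
  have TE' : T.1 = a |: S.1.
    move: TE; rewrite /add_e /= setUCA => E.
    by rewrite -(setU1K eT) E setU1K // in_setU1 negb_or eq_sym ae.
  by move: (none a); rewrite aE aS' TE' eqxx.
move=> a /and3P[aE aS /eqP TE].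
have ae : a != e by apply: contraNneq eT => <-; rewrite TE setU11.
have aS' : a \notin (add_e S).1 by rewrite /add_e /= in_setU1 negb_or ae.
have TE' : (add_e T).1 = a |: (add_e S).1 by rewrite /add_e /= TE setUCA.
rewrite (dcoefE aE aS TE) (dcoefE aE aS' TE') step_add_e //.
case E: (step G S a) => [T'|] /=; last by rewrite !mulr0 oppr0.
have eT' : e \notin T'.1 by rewrite (step_edges E) in_setU1 negb_or eq_sym ae.
rewrite -[Some (add_e T') == _]/(add_e T' == add_e T) -[Some T' == _]/(T' == T).
rewrite add_e_eq //; case: eqP => _; last by rewrite !mulr0 oppr0.
rewrite /add_e_sign TE /add_e /= -!exprD sign_oppS; apply: sign_odd.
rewrite !npreU1 // (ltn_ordC ae); parity.
Qed.

Definition toggle_e S : state := (if e \in S.1 then S.1 :\ e else e |: S.1, S.2).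

Lemma toggle_eK : involutive toggle_e.
Proof.
case=> s c; rewrite /toggle_e /=; case: (boolP (e \in s)) => es /=.
  by rewrite in_setD1 eqxx /= setD1K.
by rewrite setU11 setU1K.
Qed.

Lemma toggle_e_inj : injective toggle_e. Proof. exact: can_inj toggle_eK. Qed.

Lemma dfull_add_e u T : e' \in T.1 -> e \notin T.1 ->
  (forall S, e' \notin S.1 -> u S = 0) ->
  dfull G u (add_e T) = u T * add_e_sign T +
    \sum_(S : state | e \notin S.1) u (add_e S) * dcoef G (add_e S) (add_e T).
Proof.
move=> e'T eT uD; rewrite /dfull (bigID (fun S : state => e \notin S.1)) /=.
congr (_ + _); last first.
  rewrite (reindex_inj toggle_e_inj) /=; apply: eq_big => S.
    by rewrite /toggle_e /=; case: ifP => eS; rewrite ?setU11 // !inE eqxx.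
  move=> h; have eS : e \notin S.1.
    by move: h; rewrite /toggle_e /=; case: ifP => // _; rewrite in_setD1 eqxx.
  by rewrite /toggle_e /= (negbTE eS).
rewrite (bigD1 T) //= big1 ?addr0.
  by rewrite (@dcoefE _ _ G T (add_e T) e eE eT (erefl _)) step_e // eqxx.
move=> S /andP[eS ST]; case: (boolP (e' \in S.1)) => e'S; last by rewrite uD ?mul0r.
case: (eqVneq (add_e T).1 (e |: S.1)) => [TE|TE].
  rewrite (dcoefE eE eS TE) step_e // -[Some (add_e S) == _]/(add_e S == add_e T).
  by rewrite add_e_eq // (negbTE ST) mulr0.
rewrite dcoef_eq0 ?mulr0 // => a aE aS; apply/negP => /eqP TE2.
have ae : e = a by apply: (added_edge TE2) => //; rewrite /add_e /= setU11.
by move: TE; rewrite TE2 -ae eqxx.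
Qed.

Lemma homotopy_swapped u T : e' \in T.1 -> e \notin T.1 ->
  (forall S, e' \notin S.1 -> u S = 0) -> dfull G u (add_e T) = 0 ->
  u T = dfull G (homotopy u) T.
Proof.
move=> e'T eT uD du0.
have hsplit : dfull G (homotopy u) T =
    \sum_(S : state | e \notin S.1) homotopy u S * dcoef G S T.
  rewrite /dfull (bigID (fun S : state => e \notin S.1)) /= [X in _ + X]big1 ?addr0 //.
  by move=> S; rewrite negbK => eS; rewrite ffunE eS andbF mul0r.
have hd : add_e_sign T * dfull G (homotopy u) T =
    - \sum_(S : state | e \notin S.1) u (add_e S) * dcoef G (add_e S) (add_e T).
  rewrite hsplit mulr_sumr -sumrN; apply: eq_bigr => S eS; rewrite ffunE eS andbT.
  case: (boolP (e' \in S.1)) => e'S /=; last first.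
    by rewrite uD ?mul0r ?mulr0 ?oppr0 // /add_e /= in_setU1 negb_or e'S andbT eq_sym.
  by rewrite -mulrN -(dcoef_add_e e'S eS eT); ring.
move: du0; rewrite dfull_add_e // => /eqP; rewrite addr_eq0 => /eqP uT.
move: hd; rewrite -uT => /(congr1 (fun k => add_e_sign T * k)).
by rewrite mulrA add_e_sign2 mul1r => ->; rewrite mulrCA add_e_sign2 mulr1.
Qed.

Lemma jdeg_conn s1 s2 c : conn G s1 =2 conn G s2 -> jdeg G (s1, c) = jdeg G (s2, c).
Proof.
move=> E; rewrite /jdeg /=.
have EE : component G s1 =1 component G s2 by move=> w; apply/setP=> y; rewrite !inE E.
by rewrite (eq_imset _ EE).
Qed.

Lemma in_degree_swap i j S : in_degree G i j (swap_state S) <-> in_degree G i j S.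
Proof.
by rewrite /in_degree /= card_swap_set (@jdeg_conn (swap_set S.1) S.1 S.2 (conn_swap S.1)).
Qed.

Lemma in_degree_add_e i j S : e' \in S.1 -> e \notin S.1 ->
  in_degree G i.+1 j (add_e S) <-> in_degree G i j S.
Proof.
move=> e'S eS; rewrite /in_degree /add_e /= cardsU1 eS.
rewrite (@jdeg_conn (e |: S.1) S.1 S.2 (conn_add_e e'S)).
by split=> [[/eqP]|[->]]; [rewrite eqSS => /eqP -> | ].
Qed.

Section StableBasis.
Variables (W WD : state -> Prop).
Hypotheses (WD_W : forall S, WD S <-> W S /\ e' \notin S.1)
  (W_swap : forall S, W S -> W (swap_state S))
  (W_add_e : forall S, e' \in S.1 -> e \notin S.1 -> (W S <-> W (add_e S))).

Local Notation Wdeg i j := (fun S => W S /\ in_degree G i j S).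
Local Notation WDdeg i j := (fun S => WD S /\ in_degree D i j S).

Lemma supported_restrict i j x :
  supported (Wdeg i j) x -> supported (WDdeg i j) (restrict x).
Proof.
move=> sx S nS; rewrite ffunE; case: ifP => // e'S; apply: sx => -[WS dS].
by apply: nS; split=> //; apply/WD_W; rewrite e'S.
Qed.

Lemma supported_D i j y : supported (WDdeg i j) y -> forall S, e' \in S.1 -> y S = 0.
Proof. by move=> sy S e'S; apply: sy => -[/WD_W [_ /negP]]. Qed.

Lemma supported_lift i j y :
  supported (WDdeg i j) y -> supported (Wdeg i j) (lift y).
Proof.
move=> sy S nS; rewrite ffunE; case: ifP => e'S.
  case: ifP => // eS; rewrite sy ?mulr0 // => -[/WD_W [WS _] dS].
  apply: nS; split; first by rewrite -(swap_stateK S); apply: W_swap.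
  exact/in_degree_swap.
by apply: sy => -[/WD_W [WS _] dS]; apply: nS.
Qed.

Lemma WD_swap T : W T -> e' \in T.1 -> e \notin T.1 -> WD (swap_state T).
Proof.
move=> WT e'T eT; apply/WD_W; split; first exact: W_swap.
by rewrite /= in_swap_set swap_e'.
Qed.

Lemma lift_dfull i j z y : supported (WDdeg i j) z ->
  (forall T, WD T -> y T = dfull D z T) ->
  forall T, W T -> lift y T = dfull G (lift z) T.
Proof.
move=> sz yz T WT; have zD := supported_D sz.
case: (boolP (e' \in T.1)) => e'T; last first.
  by rewrite dfull_lift_out // ffunE (negbTE e'T) yz //; apply/WD_W.
case: (boolP (e \in T.1)) => eT; first by rewrite dfull_lift_both // ffunE e'T eT.
by rewrite dfull_lift_swapped // ffunE e'T (negbTE eT) yz //; apply: WD_swap.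
Qed.

Lemma restrict_cocycle i j x : cocycle G W i j x -> cocycle D WD i j (restrict x).
Proof.
move=> [sx cx]; split; first exact: supported_restrict.
by move=> T /WD_W [WT e'T]; rewrite dfull_restrict // cx.
Qed.

Lemma lift_cocycle i j y : cocycle D WD i j y -> cocycle G W i j (lift y).
Proof.
move=> [sy cy]; split; first exact: supported_lift.
move=> T WT; rewrite -(@lift_dfull i j y 0 sy _ T WT); last by move=> T' WT'; rewrite ffunE cy.
by rewrite !ffunE; case: ifP => // _; case: ifP => // _; rewrite mulr0.
Qed.

Lemma restrictD x1 x2 : restrict (x1 + x2) = restrict x1 + restrict x2.
Proof. by apply/ffunP=> S; rewrite !ffunE; case: ifP; rewrite ?addr0. Qed.

Lemma liftD y1 y2 : lift (y1 + y2) = lift y1 + lift y2.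
Proof.
apply/ffunP=> S; rewrite !ffunE.
by case: ifP => _ //; case: ifP => _; rewrite ?addr0 ?mulrDr.
Qed.

Lemma restrict_coboundary i j x : coboundary G W i j x -> coboundary D WD i j (restrict x).
Proof.
move=> [sx cb]; split; first exact: supported_restrict.
case: i sx cb => [|i] sx cb.
  by rewrite cb; apply/ffunP => S; rewrite !ffunE; case: ifP.
case: cb => y [sy xy]; exists (restrict y); split; first exact: supported_restrict.
by move=> T /WD_W [WT e'T]; rewrite dfull_restrict // ffunE (negbTE e'T) xy.
Qed.

Lemma lift_coboundary i j y : coboundary D WD i j y -> coboundary G W i j (lift y).
Proof.
move=> [sy cb]; split; first exact: supported_lift.
case: i sy cb => [|i] sy cb.
  rewrite cb; apply/ffunP => S; rewrite !ffunE.
  by case: ifP => // _; case: ifP => // _; rewrite mulr0.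
case: cb => z [sz yz]; exists (lift z); split; first exact: supported_lift.
exact: lift_dfull sz yz.
Qed.

(* A cocycle supported on states containing e' is a coboundary: the
   homotopy provides the primitive. *)
Lemma cocycle_on_e'_coboundary i j u : supported (Wdeg i j) u ->
  (forall S, e' \notin S.1 -> u S = 0) -> (forall T, W T -> dfull G u T = 0) ->
  coboundary G W i j u.
Proof.
move=> su uD du; split=> //; case: i su => [|i] su.
  apply/ffunP => S; rewrite [RHS]ffunE.
  case: (boolP (e' \in S.1)) => e'S; last exact: uD.
  apply: su => -[_ [/eqP]]; rewrite cards_eq0 => /eqP S0.
  by move: e'S; rewrite S0 inE.
exists (homotopy u); split.
  move=> S nS; rewrite ffunE; case: ifP => // /andP[e'S eS].
  rewrite su ?mulr0 // => -[WS dS]; apply: nS; split; first exact/(W_add_e e'S eS).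
  exact/(in_degree_add_e _ _ e'S eS).
move=> T WT; case: (boolP (e' \in T.1)) => e'T; first last.
  exact: homotopy_out.
case: (boolP (e \in T.1)) => eT; first exact: homotopy_both.
by apply: homotopy_swapped => //; apply: du; apply/(W_add_e e'T eT).
Qed.

Lemma lift_restrict_cohomologous i j x :
  cocycle G W i j x -> coboundary G W i j (lift (restrict x) - x).
Proof.
move=> Zx; have [sg cg] := lift_cocycle (restrict_cocycle Zx); case: Zx => sx cx.
apply: cocycle_on_e'_coboundary.
- by move=> S nS; rewrite ffunE sg // [(- x) S]ffunE sx // oppr0 addr0.
- by move=> S e'S; rewrite !ffunE (negbTE e'S) subrr.
- by move=> T WT; rewrite dfullB cg // cx // subrr.
Qed.

Lemma restrict_lift_id i j y : cocycle D WD i j y -> restrict (lift y) = y.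
Proof.
move=> [sy _]; apply/ffunP => S; rewrite !ffunE.
by case: ifP => e'S; [rewrite (supported_D sy) | rewrite e'S].
Qed.

Lemma stable_basis_iso i j : quot_iso (cocycle G W i j) (coboundary G W i j)
  (cocycle D WD i j) (coboundary D WD i j).
Proof.
exists restrict, lift; split; [split|split; [split|split]].
- exact: restrict_cocycle.
- by move=> x1 x2 _ _; apply: restrictD.
- exact: restrict_coboundary.
- exact: lift_cocycle.
- by move=> y1 y2 _ _; apply: liftD.
- exact: lift_coboundary.
- exact: lift_restrict_cohomologous.
move=> y Zy; rewrite (restrict_lift_id Zy) subrr; split; first by move=> S _; rewrite ffunE.
by case: (i) => [|i'] //; exists 0; split=> [S _|T _]; rewrite ?dfull0 ffunE.
Qed.

End StableBasis.

(* No negative circuit uses both e and e': it would be the 2-circuit e e',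
   whose sign is neg e + neg e' = 2 neg e, even. *)
Lemma neg_circuit_not_both s es vs : neg_circuit G s es vs -> e \in es -> e' \notin es.
Proof.
move=> [C ng] ees; apply/negP => e'es.
have := circuit_parallel_size C ees e'es ee' joins_parallel.
case/and5P: C => _ _ ues _ _.
case: es ues ng ees e'es => [|a [|b [|]]] // + + + + _.
rewrite /= !inE addn0 => /andP[ab _] ng.
case/orP=> /eqP ea; case/orP=> /eqP e'b.
- by move: ee'; rewrite ea e'b eqxx.
- by move: ng; rewrite -ea -e'b -sgn addnn odd_double.
- by move: ng; rewrite -ea -e'b -sgn addnn odd_double.
- by move: ee'; rewrite ea e'b eqxx.
Qed.

(* A negative circuit of [G : e |: s] with e' in s yields one of [G : s]:
   replace e by e' if needed. *)
Lemma neg_circuit_drop_e s es vs : e' \in s -> neg_circuit G (e |: s) es vs ->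
  exists es', neg_circuit G s es' vs.
Proof.
move=> e's nc; have ins := neg_circuit_edges nc; have nboth := neg_circuit_not_both nc.
pose r a := if a == e then e' else a.
exists (map r es); apply: (neg_circuit_map (f := r)) nc.
- by move=> a x y; rewrite /r; case: eqP => // ->; rewrite joins_parallel.
- by move=> a; rewrite /r; case: eqP => // ->.
- move=> a b ain bin; rewrite /r.
  have e'_out c : c \in es -> c = e -> e' \notin es by move=> cin ce; apply: nboth; rewrite -ce.
  case: eqP => [ae|_]; case: eqP => [be|_]; rewrite ?ae ?be // => E.
    by case/negP: (e'_out a ain ae); rewrite E.
  by case/negP: (e'_out b bin be); rewrite -E.
- move=> a aes; rewrite /r; case: eqP => // ae.
  by move: (ins a aes); rewrite in_setU1 => /orP[/eqP|//].
Qed.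

Lemma neg_circuit_swap s es vs :
  neg_circuit G (swap_set s) es vs -> neg_circuit G s (map swap_edge es) vs.
Proof.
move=> nc; have ins := neg_circuit_edges nc.
apply: (neg_circuit_map (f := swap_edge)) nc.
- exact: joins_swap.
- exact: neg_swap.
- by move=> a b _ _; apply: swap_edge_inj.
- by move=> a /ins; rewrite in_swap_set.
Qed.

Lemma enhanced_delete S : is_enhanced D S <-> is_enhanced G S /\ e' \notin S.1.
Proof.
rewrite /is_enhanced [edges D]/= subsetD1.
by split=> [[/andP[a b] c] | [[a c] b]]; split=> //; rewrite a b.
Qed.

Lemma enhanced_swap S : is_enhanced G S -> is_enhanced G (swap_state S).
Proof.
case=> sE lab; split; first exact: swap_set_sub.
by move=> u v; rewrite /= conn_swap; apply: lab.
Qed.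

Lemma enhanced_add_e S : e' \in S.1 -> (is_enhanced G S <-> is_enhanced G (add_e S)).
Proof.
move=> e'S; rewrite /is_enhanced /add_e /= subUset sub1set eE /=.
split=> -[sE lab]; split=> // u v; first by rewrite conn_add_e //; apply: lab.
by move=> uv; apply: lab; rewrite conn_add_e.
Qed.

Lemma unbalanced_swap s w : unbalanced_comp G (swap_set s) w -> unbalanced_comp G s w.
Proof.
case=> es [vs [nc al]]; exists (map swap_edge es), vs; split; first exact: neg_circuit_swap.
by apply: sub_all al => v; rewrite conn_swap.
Qed.

Lemma unbalanced_add_e s w : e' \in s ->
  (unbalanced_comp G (e |: s) w <-> unbalanced_comp G s w).
Proof.
move=> e's; split => -[es [vs [nc al]]].
  have [es' nc'] := neg_circuit_drop_e e's nc; exists es', vs; split=> //.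
  by apply: sub_all al => v; rewrite conn_add_e.
exists es, vs; split; first by apply: neg_circuit_sub nc; apply: subsetUr.
by apply: sub_all al => v; rewrite conn_add_e.
Qed.

Lemma balanced_swap s : balanced G s -> balanced G (swap_set s).
Proof. by move=> B es vs /neg_circuit_swap; apply: B. Qed.

Lemma balanced_add_e s : e' \in s -> (balanced G s <-> balanced G (e |: s)).
Proof.
move=> e's; split=> B es vs nc; first by have [es' /B] := neg_circuit_drop_e e's nc.
by apply: (B es vs); apply: neg_circuit_sub nc; apply: subsetUr.
Qed.

Lemma H_iso_delete i j : H_iso G D i j.
Proof.
apply: stable_basis_iso.
- move=> S; rewrite /W_SG enhanced_delete.
  by split=> [[[en e'S] unb] | [[en unb] e'S]].
- by case=> s c [en unb]; split; [exact: enhanced_swap | move=> w /unbalanced_swap /unb].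
move=> [s c] /= e'S _; rewrite /W_SG (enhanced_add_e (S := (s, c))) //=.
by split=> -[en unb]; split=> // w /(unbalanced_add_e w e'S) /unb.
Qed.

Lemma Hb_iso_delete i j : Hb_iso G D i j.
Proof.
apply: stable_basis_iso.
- move=> S; rewrite /W_b enhanced_delete.
  by split=> [[[en e'S] bal] | [[en bal] e'S]].
- by case=> s c [en bal]; split; [exact: enhanced_swap | exact: balanced_swap].
move=> [s c] /= e'S _.
by rewrite /W_b (enhanced_add_e (S := (s, c))) //= (balanced_add_e e'S).
Qed.

End ParallelEdges.

Theorem proposition5p8 (V : finType) (m : nat) (G : sgraph V m) (e e' : 'I_m) :
  e \in edges G -> e' \in edges G -> e != e' ->
  parallel G e e' -> neg G e = neg G e' ->
  forall i j : nat,
    H_iso G (delete_edge G e') i j /\ Hb_iso G (delete_edge G e') i j.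
Proof.
move=> eE e'E ee' par sgn i j.
by split; [exact: (H_iso_delete eE e'E ee' par sgn) | exact: (Hb_iso_delete eE e'E ee' par sgn)].
Qed.
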